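(* Let $\mathbb{K}$ be a field of characteristic $2$, let $(A,\cdot,\{-,-\},(-)^{\{2\}})$ be a restricted Poisson algebra, let $k\ge1$, and let $(A^t_k,\cdot,\mu_{(k)},\omega_{(k)})$ be a formal deformation of order $k$ of $A$, with $\mu_{(k)}=\{-,-\}+\sum_{i=1}^kt^i\mu_i$ and $\omega_{(k)}=(-)^{\{2\}}+\sum_{i=1}^kt^i\omega_i$. Then $(\mu_1,\omega_1)\in Z^2_{\rm PA}(A)$.
   Context: $\mathbb{K}$ has characteristic $2$. Restricted Poisson algebra: commutative associative $(A,\cdot)$ with Lie bracket satisfying $\{ab,c\}=a\{b,c\}+b\{a,c\}$, and a map $(-)^{\{2\}}$ with $(\lambda x)^{\{2\}}=\lambda^2x^{\{2\}}$, $\mathrm{ad}_{x^{\{2\}}}=\mathrm{ad}_x^2$, $(x+y)^{\{2\}}=x^{\{2\}}+y^{\{2\}}+\{x,y\}$, $(xy)^{\{2\}}=x^2y^{\{2\}}+y^2x^{\{2\}}+xy\{x,y\}$. $\mathfrak{X}^n(A)$: alternating $n$-linear maps $A^n\to A$ that are derivations of $\cdot$ in each argument. $C^2_{\rm PA}(A)$: pairs $(\varphi,\omega)$, $\varphi\in\mathfrak{X}^2(A)$, $\omega:A\to A$ with $\omega(\lambda x)=\lambda^2\omega(x)$, $\omega(x+y)=\omega(x)+\omega(y)+\varphi(x,y)$, $\omega(xy)=x^2\omega(y)+y^2\omega(x)+xy\varphi(x,y)$. $Z^2_{\rm PA}(A)$: those with $\mathrm{d}^2(\varphi,\omega)=0$,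 where $\mathrm{d}^2(\varphi,\omega)=(\mathrm{d}_{\rm CE}\varphi,\delta^2\omega)$, $\mathrm{d}_{\rm CE}\varphi(x,y,z)=\varphi(\{x,y\},z)+\varphi(\{x,z\},y)+\varphi(\{y,z\},x)+\{x,\varphi(y,z)\}+\{y,\varphi(x,z)\}+\{z,\varphi(x,y)\}$ and $\delta^2\omega(x,z)=\{x,\varphi(x,z)\}+\{z,\omega(x)\}+\varphi(x^{\{2\}},z)+\varphi(\{x,z\},x)$. $\mathbb{K}^t_k=\mathbb{K}[t]/(t^{k+1})$, $A^t_k=A\otimes\mathbb{K}^t_k$. A formal deformation of order $k$: $(\mu_i,\omega_i)\in C^2_{\rm PA}(A)$ for all $i$, such that $(A^t_k,\mu_{(k)},\omega_{(k)})$ is a restricted Lie algebra over $\mathbb{K}^t_k$ ($\mu_{(k)}$ extended $\mathbb{K}^t_k$-bilinearly, $\omega_{(k)}$ extended by $\omega(\lambda X)=\lambda^2\omega(X)$, $\omega(X+Y)=\omega(X)+\omega(Y)+\mu(X,Y)$). *)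

From HB Require Import structures.
From mathcomp Require Import all_boot all_order all_algebra.
Set Implicit Arguments. Unset Strict Implicit. Unset Printing Implicit Defensive.
Import GRing.Theory.
Local Open Scope ring_scope.

(* Generic restricted Lie algebra (characteristic 2 conventions) over a
   scalar "ring" S given by its multiplication smul, acting on the
   Z-module V by scale. *)
Definition restricted_Lie (S : Type) (smul : S -> S -> S) (V : zmodType)
  (scale : S -> V -> V) (br : V -> V -> V) (w : V -> V) : Prop :=
  (forall a x y z, br (scale a x + y) z = scale a (br x z) + br y z) /\
  (forall a x y z, br z (scale a x + y) = scale a (br z x) + br z y) /\
  (forall x, br x x = 0) /\
  (forall x y z, br x (br y z) + br y (br z x) + br z (br x y) = 0) /\
  (forall a x, w (scale a x) = scale (smul a a) (w x)) /\
  (forall x y, w (x + y) = w x + w y + br x y) /\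
  (forall x y, br (w x) y = br x (br x y)).

Definition restricted_Poisson (K : fieldType) (A : comAlgType K)
  (br : A -> A -> A) (p : A -> A) : Prop :=
  [/\ restricted_Lie (fun a b : K => a * b) (fun (a : K) (x : A) => a *: x) br p,
      (forall a b c, br (a * b) c = a * br b c + b * br a c)
    & (forall x y, p (x * y) = x ^+ 2 * p y + y ^+ 2 * p x + x * y * br x y)].

Definition biderivation (K : fieldType) (A : comAlgType K) (phi : A -> A -> A) : Prop :=
  [/\ (forall (a : K) x y z, phi (a *: x + y) z = a *: phi x z + phi y z),
      (forall (a : K) x y z, phi z (a *: x + y) = a *: phi z x + phi z y),
      (forall x, phi x x = 0),
      (forall a b c, phi (a * b) c = a * phi b c + b * phi a c)
    & (forall a b c, phi c (a * b) = a * phi c b + b * phi c a)].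

Definition C2PA (K : fieldType) (A : comAlgType K) (phi : A -> A -> A) (w : A -> A) : Prop :=
  [/\ biderivation phi,
      (forall (a : K) x, w (a *: x) = (a ^+ 2) *: w x),
      (forall x y, w (x + y) = w x + w y + phi x y)
    & (forall x y, w (x * y) = x ^+ 2 * w y + y ^+ 2 * w x + x * y * phi x y)].

Definition dCE (K : fieldType) (A : comAlgType K) (br : A -> A -> A)
  (phi : A -> A -> A) (x y z : A) : A :=
  phi (br x y) z + phi (br x z) y + phi (br y z) x
  + br x (phi y z) + br y (phi x z) + br z (phi x y).

Definition delta2 (K : fieldType) (A : comAlgType K) (br : A -> A -> A) (p : A -> A)
  (phi : A -> A -> A) (w : A -> A) (x z : A) : A :=
  br x (phi x z) + br z (w x) + phi (p x) z + phi (br x z) x.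

Definition Z2PA (K : fieldType) (A : comAlgType K) (br : A -> A -> A) (p : A -> A)
  (phi : A -> A -> A) (w : A -> A) : Prop :=
  [/\ C2PA phi w,
      (forall x y z, dCE br phi x y z = 0)
    & (forall x z, delta2 br p phi w x z = 0)].

(* K^t_k = K[t]/(t^(k+1)), elements = coefficient vectors indexed by 'I_k.+1 *)
Definition Kt (K : fieldType) (k : nat) := {ffun 'I_k.+1 -> K}.
(* A^t_k = A (x) K^t_k *)
Definition At (K : fieldType) (A : comAlgType K) (k : nat) := {ffun 'I_k.+1 -> A}.

Definition Kt_mul (K : fieldType) (k : nat) (a b : Kt K k) : Kt K k :=
  [ffun n : 'I_k.+1 => \sum_(i < k.+1) \sum_(j < k.+1 | (i + j == n)%N) a i * b j].

Definition At_scale (K : fieldType) (A : comAlgType K) (k : nat) (a : Kt K k)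
  (X : At A k) : At A k :=
  [ffun n : 'I_k.+1 => \sum_(i < k.+1) \sum_(j < k.+1 | (i + j == n)%N) a i *: X j].

Definition full_mu (K : fieldType) (A : comAlgType K) (br : A -> A -> A)
  (mu : nat -> A -> A -> A) (i : nat) : A -> A -> A :=
  if i == 0%N then br else mu i.
Definition full_om (K : fieldType) (A : comAlgType K) (p : A -> A)
  (om : nat -> A -> A) (i : nat) : A -> A :=
  if i == 0%N then p else om i.

(* mu_(k) extended K^t_k-bilinearly *)
Definition mu_k (K : fieldType) (A : comAlgType K) (br : A -> A -> A)
  (mu : nat -> A -> A -> A) (k : nat) (X Y : At A k) : At A k :=
  [ffun n : 'I_k.+1 => \sum_(i < k.+1) \sum_(j < k.+1) \sum_(l < k.+1 | (i + j + l == n)%N)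
      full_mu br mu i (X j) (Y l)].

(* omega_(k) extended by omega(lambda X) = lambda^2 omega(X) and
   omega(X+Y) = omega(X) + omega(Y) + mu(X,Y):
   omega(sum_j t^j X_j) = sum_{i,j} t^(i+2j) omega_i(X_j)
                         + sum_{i, j<l} t^(i+j+l) mu_i(X_j, X_l). *)
Definition om_k (K : fieldType) (A : comAlgType K) (br : A -> A -> A) (p : A -> A)
  (mu : nat -> A -> A -> A) (om : nat -> A -> A) (k : nat) (X : At A k) : At A k :=
  [ffun n : 'I_k.+1 =>
      \sum_(i < k.+1) \sum_(j < k.+1 | (i + 2 * j == n)%N) full_om p om i (X j)
    + \sum_(i < k.+1) \sum_(j < k.+1) \sum_(l < k.+1 | (j < l)%N && (i + j + l == n)%N)
        full_mu br mu i (X j) (X l)].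

Definition formal_deformation (K : fieldType) (A : comAlgType K)
  (br : A -> A -> A) (p : A -> A) (k : nat)
  (mu : nat -> A -> A -> A) (om : nat -> A -> A) : Prop :=
  (forall i, (1 <= i <= k)%N -> C2PA (mu i) (om i)) /\
  restricted_Lie (@Kt_mul K k) (@At_scale K A k) (mu_k br mu (k:=k)) (om_k br p mu om (k:=k)).

(* Embed A into A^t_k as the constant series x |-> x t^0.  On constants the
   bracket mu_(k) and the map omega_(k) have t-coefficients mu_i and omega_i,
   so the t^1-coefficients of the Jacobi identity and of
   ad_{omega_(k)(X)} = ad_X^2 only involve {-,-}, (-)^{2}, mu_1 and omega_1.
   In characteristic 2 the alternating maps {-,-} and mu_1 are symmetric, and
   these two coefficients are d_CE mu_1 and delta^2 omega_1 respectively. *)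

From mathcomp Require Import all_boot all_order all_algebra.
From mathcomp Require Import ring.
Local Open Scope ring_scope.
Import GRing.Theory.

Lemma addrr_pchar2_lmod {K : fieldType} {V : lmodType K} (v : V) :
  2%N \in [pchar K] -> v + v = 0.
Proof. by move=> charK2; rewrite -mulr2n -scaler_nat (pcharf0 charK2) scale0r. Qed.

Lemma ffunDE (I : finType) (V : zmodType) (f g : {ffun I -> V}) i :
  (f + g) i = f i + g i.
Proof. by rewrite ffunE. Qed.

Lemma ffun0E (I : finType) (V : zmodType) i : (0 : {ffun I -> V}) i = 0.
Proof. by rewrite ffunE. Qed.

Lemma big_cond_only1 {I : finType} {V : zmodType} (j : I) (P : pred I) (F : I -> V) :
  (forall i, i != j -> P i -> F i = 0) -> \sum_(i | P i) F i = if P j then F j else 0.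
Proof.
move=> F_eq0; rewrite big_mkcond (big_only1 j) // => i i_neq_j _.
by case: ifP => // /(F_eq0 i i_neq_j).
Qed.

Lemma big_pairs_add1 {V : zmodType} {n : nat} (o1 : 'I_n.+1) (G : 'I_n.+1 -> 'I_n.+1 -> V) :
  o1 = 1%N :> nat ->
  \sum_(i < n.+1) \sum_(j < n.+1 | (i + j == 1)%N) G i j = G ord0 o1 + G o1 ord0.
Proof.
move=> o1E; have o1_neq0 : o1 != ord0 by apply/eqP => o1_eq0; rewrite o1_eq0 in o1E.
rewrite (bigD1 ord0) // (bigD1 o1) //= [X in _ + (_ + X)]big1 ?addr0.
  by congr (_ + _); apply: big_pred1 => j; rewrite /= -(inj_eq val_inj) /= o1E.
move=> i /andP[i_neq0 i_neq1]; apply: big_pred0 => j.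
move: i_neq0 i_neq1; rewrite -!(inj_eq val_inj) /= o1E.
by case: (nat_of_ord i) => [|[|i']].
Qed.

Section Bilinear.

Variables (K : fieldType) (U V : lmodType K) (f : U -> U -> V).
Hypothesis f_linl : forall (a : K) x y z, f (a *: x + y) z = a *: f x z + f y z.
Hypothesis f_linr : forall (a : K) x y z, f z (a *: x + y) = a *: f z x + f z y.

Lemma bilin0l z : f 0 z = 0.
Proof. by have := f_linl (-1) 0 0 z; rewrite !scaleN1r !addNr. Qed.

Lemma bilin0r z : f z 0 = 0.
Proof. by have := f_linr (-1) 0 0 z; rewrite !scaleN1r !addNr. Qed.

Lemma alternating_bilin_sym_pchar2 :
  2%N \in [pchar K] -> (forall x, f x x = 0) -> forall x y, f x y = f y x.
Proof.
move=> charK2 f_alt x y.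
have addl u v w : f (u + v) w = f u w + f v w by have := f_linl 1 u v w; rewrite !scale1r.
have addr u v w : f w (u + v) = f w u + f w v by have := f_linr 1 u v w; rewrite !scale1r.
have : f (x + y) (x + y) = 0 := f_alt _.
rewrite addl !addr !f_alt add0r addr0 => /eqP; rewrite addr_eq0 => /eqP->.
by rewrite -[LHS]addr0 -(addrr_pchar2_lmod (f y x) charK2) addrA addNr add0r.
Qed.

End Bilinear.

Section ConstantSeries.

Context {K : fieldType} {A : comAlgType K} {br : A -> A -> A} {p : A -> A}.
Context {k : nat} {mu : nat -> A -> A -> A} {om : nat -> A -> A}.
Hypothesis k_gt0 : (0 < k)%N.
Hypothesis br_linl : forall (a : K) x y z, br (a *: x + y) z = a *: br x z + br y z.
Hypothesis br_linr : forall (a : K) x y z, br z (a *: x + y) = a *: br z x + br z y.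
Hypothesis p0 : p 0 = 0.
Hypothesis mu_om_C2PA : forall i, (1 <= i <= k)%N -> C2PA (mu i) (om i).

Let o1 : 'I_k.+1 := Ordinal (k_gt0 : (1 < k.+1)%N).

Definition At_const (x : A) : At A k :=
  [ffun n : 'I_k.+1 => if n == ord0 then x else 0].

Notation Fm := (full_mu br mu).
Notation Fo := (full_om p om).

Lemma At_const0 x : At_const x ord0 = x.
Proof. by rewrite ffunE. Qed.

Lemma At_const_neq0 x (j : 'I_k.+1) : j != ord0 -> At_const x j = 0.
Proof. by move=> j_neq0; rewrite ffunE (negPf j_neq0). Qed.

Lemma mu_om_C2PA_ord {i : 'I_k.+1} : (i != 0 :> nat) -> C2PA (mu i) (om i).
Proof. by move=> i_neq0; apply: mu_om_C2PA; rewrite lt0n -ltnS ltn_ord andbT. Qed.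

Lemma full_mu0l (i : 'I_k.+1) y : Fm i 0 y = 0.
Proof.
rewrite /full_mu; case: eqP => [_|/eqP i_neq0]; first exact: bilin0l.
by have [[linl _ _ _ _] _ _ _] := mu_om_C2PA_ord i_neq0; apply: bilin0l.
Qed.

Lemma full_mu0r (i : 'I_k.+1) x : Fm i x 0 = 0.
Proof.
rewrite /full_mu; case: eqP => [_|/eqP i_neq0]; first exact: bilin0r.
by have [[_ linr _ _ _] _ _ _] := mu_om_C2PA_ord i_neq0; apply: bilin0r.
Qed.

Lemma full_om0 (i : 'I_k.+1) : Fo i 0 = 0.
Proof.
rewrite /full_om; case: eqP => [//|/eqP i_neq0].
have [_ omZ _ _] := mu_om_C2PA_ord i_neq0.
by have := omZ 0 0; rewrite !scale0r => ->; rewrite expr0n scale0r.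
Qed.

Lemma mu_k_constl x (Y : At A k) n :
  mu_k br mu (At_const x) Y n = \sum_(i < k.+1) \sum_(l < k.+1 | (i + l == n)%N) Fm i x (Y l).
Proof.
rewrite ffunE; apply: eq_bigr => i _; rewrite (big_only1 ord0) ?At_const0 ?addn0 //.
by move=> j j_neq0 _; rewrite big1 // => l _; rewrite At_const_neq0 ?full_mu0l.
Qed.

Lemma big_full_mu_constr (i : 'I_k.+1) x y (P : pred 'I_k.+1) :
  \sum_(l | P l) Fm i x (At_const y l) = if P ord0 then Fm i x y else 0.
Proof.
rewrite (big_cond_only1 ord0) ?At_const0 // => l l_neq0 _.
by rewrite At_const_neq0 ?full_mu0r.
Qed.

Lemma big_full_om_const (i : 'I_k.+1) x (P : pred 'I_k.+1) :
  \sum_(j | P j) Fo i (At_const x j) = if P ord0 then Fo i x else 0.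
Proof.
rewrite (big_cond_only1 ord0) ?At_const0 // => j j_neq0 _.
by rewrite At_const_neq0 ?full_om0.
Qed.

Lemma mu_k_constr (X : At A k) z n :
  mu_k br mu X (At_const z) n = \sum_(i < k.+1) \sum_(j < k.+1 | (i + j == n)%N) Fm i (X j) z.
Proof.
rewrite ffunE; apply: eq_bigr => i _; rewrite [RHS]big_mkcond; apply: eq_bigr => j _.
by rewrite big_full_mu_constr addn0.
Qed.

Lemma mu_k_const x y :
  mu_k br mu (At_const x) (At_const y) = [ffun n : 'I_k.+1 => Fm n x y].
Proof.
apply/ffunP => n; rewrite mu_k_constl ffunE.
under eq_bigr do rewrite big_full_mu_constr.
by rewrite -big_mkcond (big_pred1 n) // => i; rewrite /= addn0.
Qed.

Lemma om_k_const x : om_k br p mu om (At_const x) = [ffun n : 'I_k.+1 => Fo n x].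
Proof.
apply/ffunP => n; rewrite !ffunE [X in _ + X]big1 ?addr0 => [|i _]; last first.
  apply: big1 => j _; apply: big1 => l /andP[lt_jl _].
  by rewrite (At_const_neq0 x l) ?full_mu0r //; apply: contraTneq lt_jl => ->.
under eq_bigr do rewrite big_full_om_const.
by rewrite -big_mkcond (big_pred1 n) // => i; rewrite /= muln0 addn0.
Qed.

Hypothesis charK2 : 2%N \in [pchar K].
Hypothesis br_alt : forall x, br x x = 0.
Hypothesis mu_k_jacobi : forall X Y Z : At A k,
  mu_k br mu X (mu_k br mu Y Z) + mu_k br mu Y (mu_k br mu Z X)
  + mu_k br mu Z (mu_k br mu X Y) = 0.
Hypothesis mu_k_om_k_ad : forall X Y : At A k,
  mu_k br mu (om_k br p mu om X) Y = mu_k br mu X (mu_k br mu X Y).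

Lemma mu_k_constl_coef1 x (Y : At A k) :
  mu_k br mu (At_const x) Y o1 = br x (Y o1) + mu 1 x (Y ord0).
Proof. by rewrite mu_k_constl (big_pairs_add1 o1). Qed.

Lemma mu_k_constr_coef1 (X : At A k) z :
  mu_k br mu X (At_const z) o1 = br (X o1) z + mu 1 (X ord0) z.
Proof. by rewrite mu_k_constr (big_pairs_add1 o1). Qed.

Lemma br_sym x y : br x y = br y x.
Proof. exact: alternating_bilin_sym_pchar2. Qed.

Lemma mu1_sym x y : mu 1 x y = mu 1 y x.
Proof.
have [[linl linr alt _ _] _ _ _] := mu_om_C2PA 1 k_gt0.
exact: alternating_bilin_sym_pchar2.
Qed.

Lemma dCE_mu1_eq0 x y z : dCE br (mu 1) x y z = 0.
Proof.
have := congr1 (fun F : {ffun 'I_k.+1 -> A} => F o1)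
  (mu_k_jacobi (At_const x) (At_const y) (At_const z)).
rewrite /= !ffunDE ffun0E !mu_k_const !mu_k_constl_coef1 !ffunE /full_mu /= => jacobi1.
rewrite (mu1_sym x) (mu1_sym z x) (mu1_sym y (br z x)) (br_sym z x) in jacobi1.
by rewrite (mu1_sym z (br x y)) in jacobi1; rewrite -[RHS]jacobi1 /dCE; ring.
Qed.

Lemma delta2_mu1_eq0 x z : delta2 br p (mu 1) (om 1) x z = 0.
Proof.
have := congr1 (fun F : {ffun 'I_k.+1 -> A} => F o1)
  (mu_k_om_k_ad (At_const x) (At_const z)).
rewrite /= mu_k_constr_coef1 om_k_const mu_k_const mu_k_constl_coef1 !ffunE.
rewrite /full_om /full_mu /= => ad1.
have -> : delta2 br p (mu 1) (om 1) x z
    = (br (om 1 x) z + mu 1 (p x) z) + (br x (mu 1 x z) + mu 1 x (br x z)).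
  by rewrite /delta2 (br_sym z) (mu1_sym (br x z)); ring.
by rewrite ad1 addrr_pchar2_lmod.
Qed.

Lemma Z2PA_mu1_om1 : Z2PA br p (mu 1) (om 1).
Proof. by split; [apply: mu_om_C2PA | apply: dCE_mu1_eq0 | apply: delta2_mu1_eq0]. Qed.

End ConstantSeries.

Theorem mainTheorem15 (K : fieldType) (A : comAlgType K)
  (br : A -> A -> A) (p : A -> A) (k : nat)
  (mu : nat -> A -> A -> A) (om : nat -> A -> A) :
  (2%N \in [pchar K]) ->
  restricted_Poisson br p ->
  (1 <= k)%N ->
  formal_deformation br p k mu om ->
  Z2PA br p (mu 1%N) (om 1%N).
Proof.
move=> charK2 [[br_linl [br_linr [br_alt [_ [pZ _]]]]] _ _] k_gt0.
move=> [mu_om_C2PA [_ [_ [_ [mu_k_jacobi [_ [_ mu_k_om_k_ad]]]]]]].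
have p0 : p 0 = 0 by have := pZ 0 0; rewrite !scale0r => ->; rewrite mul0r scale0r.
exact: (Z2PA_mu1_om1 k_gt0 br_linl br_linr p0 mu_om_C2PA charK2 br_alt
  mu_k_jacobi mu_k_om_k_ad).
Qed.
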